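(* For any $u,v\in\mathbb{R}^d$, \[ \{\langle u, Bv\rangle : B\in \mathbb{B}^u_d\} = \{\langle u, Bv\rangle : B\in \mathbb{B}_d\} = \big[\langle u^\downarrow, v^\uparrow\rangle,\ \langle u^\downarrow, v^\downarrow\rangle\big]. \]
   Context: $\langle u,v\rangle=\sum_j u_jv_j$ for real vectors. For $u\in\mathbb{R}^d$, $u^\downarrow$ (resp. $u^\uparrow$) is the vector with the same entries rearranged in decreasing (resp. increasing) order. $\mathbb{B}_d$ is the set of $d\times d$ bistochastic (doubly stochastic) matrices: real matrices with nonnegative entries whose rows and columns each sum to $1$. $\mathbb{B}^u_d\subseteq\mathbb{B}_d$ is the set of unistochastic matrices, i.e. matrices of the form $[\,|U_{ij}|^2\,]_{i,j}$ for some $d\times d$ unitary matrix $U$. *)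

(* The real field R^d is modelled inside an arbitrary
   numClosedFieldType C (e.g. the complex numbers), real vectors being
   C-vectors with real entries; unitaries are C-matrices. *)
From HB Require Import structures.
From mathcomp Require Import all_boot all_order all_algebra.
Set Implicit Arguments. Unset Strict Implicit. Unset Printing Implicit Defensive.
Import Order.TTheory GRing.Theory Num.Theory.
Local Open Scope ring_scope.

Section Defs.
Variable C : numClosedFieldType.

Definition inner (d : nat) (u w : 'cV[C]_d) : C := \sum_(i < d) u i 0 * w i 0.

Definition vdown (d : nat) (u : 'cV[C]_d) : 'cV[C]_d :=
  \col_(i < d) nth 0 (sort (fun x y : C => y <= x) [seq u j 0 | j <- enum 'I_d]) i.
Definition vup (d : nat) (u : 'cV[C]_d) : 'cV[C]_d :=
  \col_(i < d) nth 0 (sort (fun x y : C => x <= y) [seq u j 0 | j <- enum 'I_d]) i.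

Definition real_vec (d : nat) (u : 'cV[C]_d) : Prop := forall i, u i 0 \is Num.real.

Definition bistochastic (d : nat) (B : 'M[C]_d) : Prop :=
  (forall i j, 0 <= B i j) /\
  (forall i, \sum_(j < d) B i j = 1) /\
  (forall j, \sum_(i < d) B i j = 1).

Definition unitary (d : nat) (U : 'M[C]_d) : Prop :=
  U *m (map_mx Num.conj U)^T = 1%:M.

Definition unistochastic (d : nat) (B : 'M[C]_d) : Prop :=
  exists U : 'M[C]_d, unitary U /\ B = \matrix_(i, j) (`|U i j| ^+ 2).
End Defs.

From mathcomp Require Import all_boot all_order all_algebra all_fingroup ring.
Import Order.TTheory GRing.Theory Num.Theory.
Local Open Scope ring_scope.
Set Implicit Arguments. Unset Strict Implicit. Unset Printing Implicit Defensive.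

(* The numerical range of a pair of real vectors under doubly stochastic
   matrices (Theorem 3).  Write f(B) = <u, B v>.  The proof has three parts.

   1. Bounds.  After permuting rows and columns, u and v may be taken sorted.
      For a bistochastic B and nonincreasing a, b the prefix sums of B b are
      dominated by those of b (a "bathtub" argument on column masses) with
      equal totals, so Abel summation gives <a, B b> <= <a, b>; applied to
      (u^down, v^down) and (u^down, -v^up) this bounds f(B) on both sides.
   2. Unistochastic matrices are bistochastic (rows and columns of a unitary
      have norm one), so their range lies in the same interval.
   3. Conversely every point of the interval is f(B) for a unistochastic B.
      The endpoints are values of permutation matrices; a Givens rotation in
      the plane (a, b) shows that the convex combination (1-t) P_s +
      t P_(a b) s is unistochastic, so every value between f(P_s) and
      f(P_(a b) s) is attained.  Writing the permutation carrying one
      endpoint to the other as a product of transpositions and using an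
      intermediate-value argument along this chain covers the interval. *)

Section InnerProduct.
Variable C : numClosedFieldType.

Lemma inner_mulmx d (a b : 'cV[C]_d) (B : 'M[C]_d) :
  inner a (B *m b) = \sum_i a i 0 * \sum_j B i j * b j 0.
Proof. by apply: eq_bigr => i _; rewrite mxE. Qed.

Lemma inner_oppr d (a b : 'cV[C]_d) : inner a (- b) = - inner a b.
Proof. by rewrite /inner -sumrN; apply: eq_bigr => i _; rewrite mxE mulrN. Qed.

Lemma inner_comb d (a x y : 'cV[C]_d) (al be : C) :
  inner a (al *: x + be *: y) = al * inner a x + be * inner a y.
Proof.
rewrite /inner !mulr_sumr -big_split /=; apply: eq_bigr => i _; rewrite !mxE; ring.
Qed.
End InnerProduct.

Section Rearrangement.
Variable C : numClosedFieldType.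

Definition nonincreasing d (a : 'I_d -> C) : Prop :=
  forall i j : 'I_d, (i <= j)%N -> a j <= a i.

Lemma bistochastic_colsum d (B : 'M[C]_d) (b : 'I_d -> C) : bistochastic B ->
  \sum_i \sum_j B i j * b j = \sum_j b j.
Proof.
move=> [_ [_ colB]]; rewrite exchange_big; apply: eq_bigr => j _.
by rewrite -mulr_suml colB mul1r.
Qed.

Lemma bathtub d (w b : 'I_d -> C) (k : nat) : (k < d)%N ->
  (forall j, 0 <= w j <= 1) -> \sum_j w j = \sum_(j < d | (j < k)%N) 1 ->
  nonincreasing b -> \sum_j w j * b j <= \sum_(j < d | (j < k)%N) b j.
Proof.
move=> kd w01 sumw decb; set p := b (Ordinal kd).
pose ind (j : 'I_d) : C := ((j < k)%N)%:R.
have indE (F : 'I_d -> C) : \sum_(j < d | (j < k)%N) F j = \sum_j ind j * F j.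
  by rewrite big_mkcond; apply: eq_bigr => j _; rewrite /ind; case: ifP; rewrite ?mul1r ?mul0r.
have shift : \sum_j (ind j - w j) * p = 0.
  rewrite -mulr_suml sumrB.
  have -> : \sum_j ind j = \sum_j w j by rewrite sumw indE; apply: eq_bigr => j _; rewrite mulr1.
  by rewrite subrr mul0r.
rewrite -subr_ge0.
have -> : \sum_(j < d | (j < k)%N) b j - \sum_j w j * b j
          = \sum_j (ind j - w j) * (b j - p).
  rewrite indE [RHS](eq_bigr (fun j => ind j * b j - w j * b j - (ind j - w j) * p)).
    by rewrite sumrB shift subr0 sumrB.
  by move=> j _; ring.
apply: sumr_ge0 => j _.
have /andP [w0 w1] := w01 j; rewrite /ind; case: ltnP => jk /=.
- by rewrite mulr_ge0 // subr_ge0 // decb //= ltnW.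
- by rewrite sub0r mulNr oppr_ge0 mulr_ge0_le0 // subr_le0 decb.
Qed.

(* For nonincreasing b the prefix sums of B b are dominated by those of b;
   the column masses of the first k rows of B satisfy the bathtub premises. *)
Lemma bistochastic_prefix d (B : 'M[C]_d) (b : 'I_d -> C) (k : nat) :
  bistochastic B -> nonincreasing b ->
  \sum_(i < d | (i < k)%N) \sum_j B i j * b j <= \sum_(i < d | (i < k)%N) b i.
Proof.
move=> bistB decb; case: (ltnP k d) => [kd | dk]; last first.
  have all_lt (F : 'I_d -> C) : \sum_(i < d | (i < k)%N) F i = \sum_i F i.
    by apply: eq_bigl => i; exact: leq_trans (ltn_ord i) dk.
  by rewrite !all_lt bistochastic_colsum.
have [B0 [rowB colB]] := bistB.
rewrite exchange_big /= (eq_bigr (fun j => (\sum_(i < d | (i < k)%N) B i j) * b j));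
  last by move=> j _; rewrite mulr_suml.
apply: bathtub => // [j | ].
- rewrite sumr_ge0 //= -(colB j) [leRHS](bigID (fun i : 'I_d => (i < k)%N)) /=.
  by rewrite lerDl sumr_ge0.
- by rewrite exchange_big /=; apply: eq_bigr => i _; rewrite rowB.
Qed.

Lemma abel_summation n (a c : nat -> C) :
  (forall i j, (i <= j)%N -> (j < n)%N -> a j <= a i) ->
  (forall k, (k <= n)%N -> 0 <= \sum_(i < k) c i) ->
  forall m, (m <= n)%N -> a m.-1 * \sum_(i < m) c i <= \sum_(i < m) a i * c i.
Proof.
move=> deca partc; elim=> [|m IH] mn; first by rewrite !big_ord0 mulr0.
rewrite !big_ord_recr /= mulrDr lerD2r; apply: le_trans (IH (ltnW mn)).
by rewrite ler_wpM2r ?partc 1?ltnW // deca // leq_pred.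
Qed.

(* Rearrangement inequality for bistochastic matrices: b - B b has
   nonnegative partial sums and total zero, so Abel summation applies. *)
Lemma rearrangement d (B : 'M[C]_d) (a b : 'I_d -> C) :
  bistochastic B -> nonincreasing a -> nonincreasing b ->
  \sum_i a i * \sum_j B i j * b j <= \sum_i a i * b i.
Proof.
case: d B a b => [|d] B a b bistB deca decb; first by rewrite !big_ord0.
pose A n := a (inord n).
pose gap n := b (inord n) - \sum_j B (inord n) j * b j.
have gapE k : (k <= d.+1)%N -> \sum_(i < k) gap i =
    \sum_(i < d.+1 | (i < k)%N) b i - \sum_(i < d.+1 | (i < k)%N) \sum_j B i j * b j.
  move=> kd; rewrite (big_ord_widen _ _ kd) -sumrB.
  by apply: eq_bigr => i _; rewrite /gap inord_val.
have gap_total : \sum_(i < d.+1) gap i = 0.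
  have all_lt (F : 'I_d.+1 -> C) : \sum_(i < d.+1 | (i < d.+1)%N) F i = \sum_i F i.
    by apply: eq_bigl => i; rewrite ltn_ord.
  by rewrite gapE // !all_lt bistochastic_colsum ?subrr.
rewrite -subr_ge0 -sumrB (eq_bigr (fun i : 'I_d.+1 => A i * gap i)); last first.
  by move=> i _; rewrite /A /gap inord_val mulrBr.
have := abel_summation (n := d.+1) (a := A) (c := gap) _ _ (leqnn _).
rewrite gap_total mulr0; apply=> [i j ij jd | k kd].
- by apply: deca; rewrite !inordK // (leq_ltn_trans ij).
- by rewrite gapE // subr_ge0 bistochastic_prefix.
Qed.

Lemma rearrangement_inner d (B : 'M[C]_d) (a b : 'cV[C]_d) : bistochastic B ->
  nonincreasing (fun i => a i 0) -> nonincreasing (fun i => b i 0) ->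
  inner a (B *m b) <= inner a b.
Proof. by move=> bistB deca decb; rewrite inner_mulmx rearrangement. Qed.

End Rearrangement.

Section Bounds.
Variable C : numClosedFieldType.

Lemma sorted_column d (u : 'cV[C]_d) (r : rel C) : real_vec u ->
  {in Num.real &, total r} -> transitive r -> reflexive r ->
  exists p : 'S_d,
    (forall i : 'I_d, nth 0 (sort r [seq u j 0 | j <- enum 'I_d]) i = u (p i) 0) /\
    (forall i j : 'I_d, (i <= j)%N ->
       r (nth 0 (sort r [seq u j 0 | j <- enum 'I_d]) i)
         (nth 0 (sort r [seq u j 0 | j <- enum 'I_d]) j)).
Proof.
move=> realu totr trr reflr; set s := [seq u j 0 | j <- enum 'I_d].
have /tuple_permP [p permE] : perm_eq (sort r s) [tuple u j 0 | j < d].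
  by rewrite perm_sort.
exists p; split=> [i | i j ij].
  by rewrite permE -(tnth_nth 0) !tnth_mktuple.
have sorted_s : sorted r (sort r s).
  by apply: (sort_sorted_in totr); apply/allP => x /mapP [k _ ->]; exact: realu.
by apply: (sorted_leq_nth trr reflr 0 sorted_s) => //;
  rewrite inE size_sort size_map size_enum_ord.
Qed.

Lemma vdownP d (u : 'cV[C]_d) : real_vec u -> exists p : 'S_d,
  (forall i, vdown u i 0 = u (p i) 0) /\ nonincreasing (fun i => vdown u i 0).
Proof.
move=> realu; have [|||p [pE sortedE]] := sorted_column (r := fun x y => y <= x) realu.
- by move=> x y xr yr; rewrite /= orbC real_leVge.
- by move=> x y z /= yx zy; exact: le_trans zy yx.
- exact: lexx.
by exists p; split=> [i | i j ij]; rewrite !mxE; [exact: pE | exact: sortedE].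
Qed.

Lemma vupP d (u : 'cV[C]_d) : real_vec u -> exists p : 'S_d,
  (forall i, vup u i 0 = u (p i) 0) /\ nonincreasing (fun i => - vup u i 0).
Proof.
move=> realu; have [|||p [pE sortedE]] := sorted_column (r := fun x y => x <= y) realu.
- by move=> x y xr yr; rewrite /= real_leVge.
- by move=> x y z /=; exact: le_trans.
- exact: lexx.
by exists p; split=> [i | i j ij]; rewrite !mxE ?lerN2; [exact: pE | exact: sortedE].
Qed.

Lemma mxsub_bistochastic d (B : 'M[C]_d) (p q : 'S_d) :
  bistochastic B -> bistochastic (mxsub p q B).
Proof.
move=> [B0 [rowB colB]]; split; [|split] => [i j | i | j]; rewrite ?mxE //.
- rewrite -(rowB (p i)) [RHS](reindex_inj (@perm_inj _ q)).
  by apply: eq_bigr => j _; rewrite mxE.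
- rewrite -(colB (q j)) [RHS](reindex_inj (@perm_inj _ p)).
  by apply: eq_bigr => i _; rewrite mxE.
Qed.

Lemma inner_mxsub d (B : 'M[C]_d) (u v x y : 'cV[C]_d) (p q : 'S_d) :
  (forall i, x i 0 = u (p i) 0) -> (forall j, y j 0 = v (q j) 0) ->
  inner x (mxsub p q B *m y) = inner u (B *m v).
Proof.
move=> xE yE; rewrite !inner_mulmx [RHS](reindex_inj (@perm_inj _ p)).
apply: eq_bigr => i _; rewrite xE [in RHS](reindex_inj (@perm_inj _ q)).
by congr (_ * _); apply: eq_bigr => j _; rewrite mxE yE.
Qed.

Lemma bistochastic_bounds d (u v : 'cV[C]_d) (B : 'M[C]_d) :
  real_vec u -> real_vec v -> bistochastic B ->
  inner (vdown u) (vup v) <= inner u (B *m v) <= inner (vdown u) (vdown v).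
Proof.
move=> realu realv bistB.
have [pu [puE decu]] := vdownP realu.
have [pv [pvE decv]] := vdownP realv.
have [pw [pwE incw]] := vupP realv.
apply/andP; split.
- rewrite -(inner_mxsub B (x := vdown u) (y := vup v) puE pwE) -lerN2.
  rewrite -!inner_oppr -mulmxN; apply: rearrangement_inner => //; first exact: mxsub_bistochastic.
  by move=> i j ij; have := incw i j ij; rewrite !mxE.
- rewrite -(inner_mxsub B (x := vdown u) (y := vdown v) puE pvE).
  by apply: rearrangement_inner => //; exact: mxsub_bistochastic.
Qed.

End Bounds.

Section Unistochastic.
Variable C : numClosedFieldType.

(* Part 2: the diagonal entries of U U^* = 1 and U^* U = 1 give the row and
   column sums of [ |U_ij|^2 ]. *)
Lemma unistochastic_bistochastic d (B : 'M[C]_d) : unistochastic B -> bistochastic B.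
Proof.
move=> [U [unitU ->]]; split; [|split] => [i j | i | j]; first by rewrite mxE exprn_ge0.
- have := congr1 (fun M : 'M[C]_d => M i i) unitU; rewrite /= !mxE eqxx mulr1n => <-.
  by apply: eq_bigr => j _; rewrite !mxE normCK.
- have := congr1 (fun M : 'M[C]_d => M j j) (mulmx1C unitU).
  rewrite /= !mxE eqxx mulr1n => <-.
  by apply: eq_bigr => i _; rewrite !mxE normCK mulrC.
Qed.

Lemma unistochastic1 d : unistochastic (1%:M : 'M[C]_d).
Proof.
exists 1%:M; split; first by rewrite /unitary map_mx1 trmx1 mulmx1.
by apply/matrixP => i j; rewrite !mxE; case: (i == j); rewrite ?normr1 ?normr0 ?expr1n ?expr0n.
Qed.

Lemma unistochastic_mul_perm d (B : 'M[C]_d) (s : 'S_d) :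
  unistochastic B -> unistochastic (B *m perm_mx s).
Proof.
move=> [U [unitU ->]]; exists (U *m perm_mx s); split.
  rewrite /unitary map_mxM map_perm_mx trmx_mul tr_perm_mx mulmxA -(mulmxA U).
  by rewrite -perm_mxM mulgV perm_mx1 mulmx1.
by rewrite -(invgK s) -!col_permE; apply/matrixP => i j; rewrite !mxE.
Qed.

End Unistochastic.

Section Givens.
Variables (C : numClosedFieldType) (d : nat) (a b : 'I_d) (t : C).
Hypotheses (neq_ab : a != b) (t_ge0 : 0 <= t) (t_le1 : t <= 1).

Let c := sqrtC (1 - t).
Let s := sqrtC t.
Let c_real : c \is Num.real. Proof. by rewrite ger0_real // sqrtC_ge0 subr_ge0. Qed.
Let s_real : s \is Num.real. Proof. by rewrite ger0_real // sqrtC_ge0. Qed.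
Let cc : c * c = 1 - t. Proof. by rewrite -expr2 sqrtCK. Qed.
Let ss : s * s = t. Proof. by rewrite -expr2 sqrtCK. Qed.
Let neq_ba : b != a. Proof. by rewrite eq_sym. Qed.

Definition givens : 'M[C]_d := \matrix_(i, j)
  if i == a then (if j == a then c else if j == b then s else 0)
  else if i == b then (if j == a then - s else if j == b then c else 0)
  else (i == j)%:R.

Lemma givens_row_sum i (F : 'I_d -> C) : \sum_k givens i k * F k =
  if i == a then c * F a + s * F b
  else if i == b then c * F b - s * F a
  else F i.
Proof.
have [ia | ia] := eqVneq i a; last have [ib | ib] := eqVneq i b.
- rewrite (bigD1 a) // (bigD1 b) //= big1 => [|k /andP [kb ka]].
    by rewrite !mxE ia eqxx (negPf neq_ba) eqxx addr0.
  by rewrite mxE ia eqxx (negPf ka) (negPf kb) mul0r.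
- rewrite (bigD1 a) // (bigD1 b) //= big1 => [|k /andP [kb ka]].
    by rewrite !mxE ib eqxx (negPf neq_ba) eqxx addr0 mulNr addrC.
  by rewrite mxE ib (negPf neq_ba) eqxx (negPf ka) (negPf kb) mul0r.
- rewrite (bigD1 i) //= big1 => [|k ki].
    by rewrite mxE (negPf ia) (negPf ib) eqxx mul1r addr0.
  by rewrite mxE (negPf ia) (negPf ib) eq_sym (negPf ki) mul0r.
Qed.

Lemma givens_real : map_mx Num.conj givens = givens.
Proof.
apply/matrixP => i j; rewrite mxE conj_Creal // mxE.
by repeat case: ifP => _; rewrite ?rpredN ?real0 ?realn.
Qed.

Lemma givens_unitary : unitary givens.
Proof.
rewrite /unitary givens_real; apply/matrixP => i j; rewrite !mxE.
under eq_bigr => k _ do rewrite [givens^T k j]mxE.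
rewrite givens_row_sum !mxE.
have [-> | ia] := eqVneq i a; last have [-> | ib] := eqVneq i b; last first.
- case: (eqVneq j a) => [-> | ja]; first by rewrite (negPf ia).
  case: (eqVneq j b) => [-> | jb]; first by rewrite (negPf ib).
  by rewrite eq_sym.
all: case: (eqVneq j a) => [ja | ja];
  [rewrite ?ja | case: (eqVneq j b) => [jb | jb]; rewrite ?jb];
  rewrite ?eqxx ?(negPf neq_ab) ?(negPf neq_ba) /= ?mulrN ?opprK ?cc ?ss; ring.
Qed.

Definition transposition_mix : 'M[C]_d := (1 - t)%:M + t *: perm_mx (tperm a b).

Lemma givens_sqr_norm : \matrix_(i, j) (`|givens i j| ^+ 2) = transposition_mix.
Proof.
have sqr_c : `|c| ^+ 2 = 1 - t by rewrite real_normK // expr2 cc.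
have sqr_s : `|s| ^+ 2 = t by rewrite real_normK // expr2 ss.
apply/matrixP => i j; rewrite !mxE.
have [-> | ia] := eqVneq i a; last have [-> | ib] := eqVneq i b.
all: rewrite ?tpermL ?tpermR; try rewrite tpermD 1?eq_sym //.
all: case: (eqVneq j a) => [ja | ja]; [rewrite ?ja | case: (eqVneq j b) => [jb | jb]; rewrite ?jb].
all: rewrite ?(negPf neq_ba) ?(eq_sym a i) ?(eq_sym b i) ?(negPf ia) ?(negPf ib).
all: rewrite ?normrN ?sqr_c ?sqr_s ?normr0 /=; try ring.
by case: (j == i); rewrite /= ?normr1 ?normr0; ring.
Qed.

Lemma transposition_mix_unistochastic : unistochastic transposition_mix.
Proof. by exists givens; split; [exact: givens_unitary | rewrite givens_sqr_norm]. Qed.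

End Givens.

Section Interpolation.
Variable C : numClosedFieldType.

Definition between (al x be : C) := (al <= x <= be) || (be <= x <= al).

Lemma between_real al x be :
  al \is Num.real -> between al x be -> x \is Num.real.
Proof.
move=> alr /orP [/andP [alx _] | /andP [_ xal]].
  by rewrite -(subrKC al x) rpredD // ger0_real // subr_ge0.
by rewrite -(subKr al x) rpredB // ger0_real // subr_ge0.
Qed.

Lemma between_split al x m be : x \is Num.real -> m \is Num.real ->
  between al x be -> between al x m \/ between m x be.
Proof.
move=> xr mr /orP [/andP [h1 h2] | /andP [h1 h2]]; case/orP: (real_leVge xr mr) => hm.
- by left; rewrite /between h1 hm.
- by right; rewrite /between hm h2.
- by right; rewrite /between h1 hm orbT.
- by left; rewrite /between hm h2 orbT.
Qed.

Lemma convex_combination (al x be : C) : al <= x <= be ->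
  exists t, [/\ 0 <= t, t <= 1 & x = (1 - t) * al + t * be].
Proof.
case/andP=> alx xbe; have [eq_albe | ne_albe] := eqVneq al be.
  exists 0; rewrite lexx ler01 subr0 mul1r mul0r addr0; split=> //.
  by apply/le_anti; rewrite alx eq_albe xbe.
have gap_gt0 : 0 < be - al by rewrite lt_def subr_eq0 eq_sym ne_albe subr_ge0 (le_trans alx).
exists ((x - al) / (be - al)); split.
- by apply: divr_ge0; [rewrite subr_ge0 | exact: ltW].
- by rewrite ler_pdivrMr // mul1r lerD2r.
- by field; rewrite subr_eq0 eq_sym.
Qed.

Lemma between_convex (al x be : C) : between al x be ->
  exists t, [/\ 0 <= t, t <= 1 & x = (1 - t) * al + t * be].
Proof.
case/orP=> [/convex_combination // | /convex_combination [t [t0 t1 ->]]].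
exists (1 - t); split; [by rewrite subr_ge0 | by rewrite lerBlDr lerDl |].
by ring.
Qed.

End Interpolation.

Section Attainable.
Variables (C : numClosedFieldType) (d : nat) (u v : 'cV[C]_d).
Hypotheses (realu : real_vec u) (realv : real_vec v).

Definition attainable (x : C) : Prop :=
  exists B : 'M[C]_d, unistochastic B /\ x = inner u (B *m v).

Definition perm_value (p : 'S_d) : C := inner u (perm_mx p *m v).

Lemma perm_value_real p : perm_value p \is Num.real.
Proof. by apply: rpred_sum => i _; rewrite -row_permE mxE rpredM. Qed.

Lemma perm_value_attainable p : attainable (perm_value p).
Proof.
exists (perm_mx p); split=> //; rewrite -[perm_mx p]mul1mx.
exact/unistochastic_mul_perm/unistochastic1.
Qed.

(* Rearranged inner products are values at permutation matrices; this
   identifies the endpoints of the interval. *)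
Lemma inner_perm_sorted (x y : 'cV[C]_d) (p q : 'S_d) :
  (forall i, x i 0 = u (p i) 0) -> (forall j, y j 0 = v (q j) 0) ->
  inner x y = perm_value (p^-1 * q).
Proof.
move=> xE yE; rewrite /perm_value -(inner_mxsub _ xE yE); congr inner.
have -> : mxsub p q (perm_mx (p^-1 * q)) = 1%:M :> 'M[C]_d.
  by apply/matrixP => i j; rewrite !mxE permM permK (inj_eq perm_inj).
by rewrite mul1mx.
Qed.

Lemma transposition_mix_value a b t (s : 'S_d) :
  inner u ((transposition_mix a b t *m perm_mx s) *m v)
  = (1 - t) * perm_value s + t * perm_value (tperm a b * s).
Proof.
rewrite /transposition_mix mulmxDl mul_scalar_mx -scalemxAl -perm_mxM.
by rewrite mulmxDl -!scalemxAl inner_comb.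
Qed.

Lemma attainable_transposition (s : 'S_d) (a b : 'I_d) x : a != b ->
  between (perm_value s) x (perm_value (tperm a b * s)) -> attainable x.
Proof.
move=> neq_ab /between_convex [t [t_ge0 t_le1 ->]].
exists (transposition_mix a b t *m perm_mx s); split.
  exact/unistochastic_mul_perm/transposition_mix_unistochastic.
by rewrite transposition_mix_value.
Qed.

(* Intermediate values along a chain of transpositions: a point between
   f(P_s) and f(P_(t_1 ... t_n) s) lies between two consecutive values. *)
Lemma attainable_chain (ts : seq ('I_d * 'I_d)) : all dpair ts ->
  forall (s : 'S_d) x,
  between (perm_value s) x (perm_value ((\prod_(e <- ts) tperm e.1 e.2)%g * s)) ->
  attainable x.
Proof.
elim: ts => [_ s x | [a b] ts IH /= /andP [neq_ab dpair_ts] s x].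
  rewrite big_nil mul1g => btw_x.
  suff -> : x = perm_value s by exact: perm_value_attainable.
  by case/orP: btw_x => /andP [le1 le2]; apply/le_anti; rewrite le1 le2.
rewrite big_cons /= -mulgA => btw_x.
set s' := ((\prod_(e <- ts) tperm e.1 e.2)%g * s)%g in btw_x *.
have x_real := between_real (perm_value_real _) btw_x.
case: (between_split x_real (perm_value_real s') btw_x) => [btw_s | btw_t].
  exact: IH dpair_ts _ _ btw_s.
exact: attainable_transposition neq_ab btw_t.
Qed.

(* Part 3: the whole interval is attained, by a chain of transpositions
   joining the two extremal permutations. *)
Lemma attainable_interval x :
  inner (vdown u) (vup v) <= x <= inner (vdown u) (vdown v) -> attainable x.
Proof.
move=> x_in.
have [pu [puE _]] := vdownP realu.
have [pv [pvE _]] := vdownP realv.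
have [pw [pwE _]] := vupP realv.
set s_min := (pu^-1 * pw)%g; set s_max := (pu^-1 * pv)%g.
have [ts prodE dpair_ts] := prod_tpermP (s_max * s_min^-1)%g.
apply: (attainable_chain dpair_ts (s := s_min)).
rewrite -prodE -mulgA mulVg mulg1.
by rewrite -(inner_perm_sorted puE pwE) -(inner_perm_sorted puE pvE) /between x_in.
Qed.

End Attainable.

Theorem mainTheorem3 (C : numClosedFieldType) (d : nat) (u v : 'cV[C]_d) :
  real_vec u -> real_vec v ->
  (forall x : C,
     (exists B : 'M[C]_d, unistochastic B /\ x = inner u (B *m v)) <->
     (exists B : 'M[C]_d, bistochastic B /\ x = inner u (B *m v))) /\
  (forall x : C,
     (exists B : 'M[C]_d, bistochastic B /\ x = inner u (B *m v)) <->
     (inner (vdown u) (vup v) <= x <= inner (vdown u) (vdown v))).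
Proof.
move=> realu realv; split=> x; split.
- by case=> B [/unistochastic_bistochastic bistB ->]; exists B.
- by case=> B [bistB ->]; apply: attainable_interval; rewrite ?bistochastic_bounds.
- by case=> B [bistB ->]; rewrite bistochastic_bounds.
- case/(attainable_interval realu realv)=> B [uniB ->].
  by exists B; split=> //; exact: unistochastic_bistochastic.
Qed.
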